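(* Let $D\subseteq\mathbb{Z}$, let $\ell\ge0$, $c>0$, and let $f:D\to\mathbb{Z}$ satisfy $f(j)-f(i)\ge c(j-i)$ for all $i,j\in D$ with $j\ge i+\ell$. Let $T$ be a $D$-valued random variable with $\mathbb{E}|f(T)|^r<+\infty$, where $r\ge1$. Then \[ \mathbb{M}_r(f(T))\ge\left(\frac{c}{2}\right)^r\left(\mathbb{M}_r(T)-\ell^r\right), \] where $\mathbb{M}_r(U):=\mathbb{E}|U-\mathbb{E}U|^r$. *)

From HB Require Import structures.
From mathcomp Require Import all_boot all_order all_algebra.
From mathcomp Require Import all_classical all_reals all_analysis.
Set Implicit Arguments. Unset Strict Implicit. Unset Printing Implicit Defensive.
Import Order.TTheory GRing.Theory Num.Theory.
Local Open Scope ring_scope.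
Local Open Scope ereal_scope.

Definition central_moment {d} {Omega : measurableType d} {R : realType}
  (P : probability Omega R) (r : R) (U : Omega -> R) : \bar R :=
  'E_P[(fun w => (`|U w - fine 'E_P[U]| `^ r)%R)].

(* Let [b = E f(T)] and let [T'] be an independent copy of [T].
   Jensen's inequality in [T'] gives [M_r(T) <= E |T - T'|^r]; the growth
   condition gives [c^r |T - T'|^r <= |f(T) - f(T')|^r + c^r l^r] pointwise;
   and convexity of [x |-> |x|^r] gives
   [E |f(T) - f(T')|^r <= 2^(r-1) (E |f(T) - b|^r + E |f(T') - b|^r) = 2^r M_r(f(T))].
   Chaining the three yields [c^r M_r(T) <= 2^r M_r(f(T)) + c^r l^r].
   The independent copy is realised as an iterated integral over [P], which
   is measurable because [T] takes countably many values. *)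

From HB Require Import structures.
From mathcomp Require Import all_boot all_order all_algebra.
From mathcomp Require Import all_classical all_reals all_analysis.
From mathcomp Require Import measurable_realfun lra.

Set Implicit Arguments.
Unset Strict Implicit.
Unset Printing Implicit Defensive.

Import Order.TTheory GRing.Theory Num.Theory.
Local Open Scope ring_scope.

Lemma powR_normD_le (R : realType) (x y p : R) : 1 <= p ->
  `|x + y| `^ p <= 2 `^ (p - 1) * (`|x| `^ p + `|y| `^ p).
Proof.
move=> p1.
have half_convex (u v : R) : `|2^-1 * u + 2^-1 * v| `^ p <=
    2^-1 * `|u| `^ p + 2^-1 * `|v| `^ p.
  rewrite (@le_trans _ _ ((2^-1 * `|u| + 2^-1 * `|v|) `^ p))//.
    rewrite ge0_ler_powR ?nnegrE ?(le_trans _ p1)//.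
    by rewrite (le_trans (ler_normD _ _))// 2!normrM ger0_norm.
  rewrite {2 4}(_ : 2^-1 = 1 - 2^-1); last by rewrite {2}(splitr 1) div1r addrK.
  by apply: (convex_powR p1 (Itv01 _ _)) => //=;
    rewrite ?inE/= ?in_itv/= ?normr_ge0// ?invr_ge0// invf_le1 ?ler1n.
have := half_convex (2 * x) (2 * y).
rewrite !normrM (@ger0_norm _ 2)// !mulrA mulVf// !mul1r => /le_trans; apply.
rewrite !powRM// !mulrA -powR_inv1// -powRD ?pnatr_eq0 ?implybT//.
by rewrite (addrC _ p) -mulrDr.
Qed.

Lemma powR_distB_le (R : realType) (x y b p : R) : 1 <= p ->
  `|x - y| `^ p <= 2 `^ (p - 1) * (`|x - b| `^ p + `|y - b| `^ p).
Proof.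
move=> p1; have -> : x - y = (x - b) + (b - y) by rewrite addrA subrK.
by rewrite [`|y - b|]distrC powR_normD_le.
Qed.

Definition lower_growth (R : realType) (D : set int) (ell c : R)
    (f : int -> int) :=
  forall i j : int, D i -> D j -> (i%:~R + ell <= (j%:~R : R)) ->
    c * (j - i)%:~R <= (f j - f i)%:~R.

Section lower_growth.
Variables (R : realType) (D : set int) (ell c : R) (f : int -> int).
Hypotheses (ell0 : 0 <= ell) (c0 : 0 < c) (growth_f : lower_growth D ell c f).

Lemma lower_growth_norm (i j : int) : D i -> D j ->
  ell <= `|j%:~R - i%:~R| -> c * `|j%:~R - i%:~R| <= `|(f j)%:~R - (f i)%:~R| :> R.
Proof.
move=> Di Dj; have [_|_] := lerP (i%:~R : R) j%:~R => ell_le.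
  by apply: le_trans (ler_norm _); rewrite -!intrB growth_f//; lra.
by rewrite distrC; apply: le_trans (ler_norm _); rewrite -!intrB growth_f//; lra.
Qed.

Lemma lower_growth_powR (r : R) (i j : int) : 0 <= r -> D i -> D j ->
  c `^ r * `|j%:~R - i%:~R| `^ r <=
    `|(f j)%:~R - (f i)%:~R| `^ r + c `^ r * ell `^ r :> R.
Proof.
move=> r0 Di Dj; have [ell_le|lt_ell] := lerP ell `|j%:~R - i%:~R|.
  rewrite -powRM ?(ltW c0)// -[leLHS]addr0 lerD ?mulr_ge0 ?powR_ge0//.
  by rewrite ge0_ler_powR ?nnegrE ?mulr_ge0 ?lower_growth_norm ?(ltW c0).
rewrite -[leLHS]add0r lerD ?powR_ge0// ler_wpM2l ?powR_ge0//.
by rewrite ge0_ler_powR ?nnegrE// ltW.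
Qed.

End lower_growth.

Local Open Scope ereal_scope.

Section moments.
Context d (Omega : measurableType d) (R : realType) (P : probability Omega R).

Lemma integral_cst_probability (a : \bar R) : \int[P]_w a = a.
Proof. by rewrite integral_cst// [X in _ * X]probability_setT mule1. Qed.

(* Lyapunov's inequality [(E |Y|)^r <= E |Y|^r], from Hoelder with [|Y| * 1]. *)
Lemma poweR_integral_abs_le (Y : Omega -> R) (r : R) : (1 <= r)%R ->
  measurable_fun setT Y ->
  (\int[P]_w `|(Y w)%:E|) `^ r <= \int[P]_w (`|Y w| `^ r)%:E.
Proof.
move=> r1 mY; have r0 : (0 < r)%R by rewrite (lt_le_trans ltr01).
have [->|r_neq1] := eqVneq r 1%R.
  rewrite poweRe1; last exact: integral_ge0.
  by under [X in _ <= X]eq_integral do rewrite powRr1//.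
pose q := (1 - r^-1)^-1%R.
have q0 : (0 < q)%R.
  by rewrite invr_gt0 subr_gt0 invf_lt1// lt_neqAle eq_sym r_neq1 r1.
have rq : (r^-1 + q^-1 = 1)%R by rewrite invrK addrC subrK.
have := @hoelder _ _ _ P Y (cst 1%R) r q mY (measurable_cst _) r0 q0 rq.
rewrite (_ : EFin \o cst 1%R = cst 1)// Lnorm_cst1 [X in X `^ _]probability_setT poweR1r.
rewrite mule1 Lnorm1; under eq_integral do rewrite /= mulr1.
move=> /(gt0_ler_poweR (ltW r0)) le_r; apply: le_trans (le_r _ _) _.
- by rewrite in_itv /= leey andbT integral_ge0.
- by rewrite in_itv /= Lnorm_ge0 leey.
by rewrite powR_Lnorm ?gt_eqF.
Qed.

Lemma powR_dist_expectation_le (X : Omega -> R) (a r : R) : (1 <= r)%R ->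
  measurable_fun setT X ->
  (`|a - fine 'E_P[X]| `^ r)%:E <= \int[P]_w (`|a - X w| `^ r)%:E.
Proof.
move=> r1 mX; pose Y w := (a - X w)%R.
have mY : measurable_fun setT Y by exact: measurable_funB.
have lyapunov := poweR_integral_abs_le r1 mY.
have [->|moment_fin] := eqVneq (\int[P]_w (`|a - X w| `^ r)%:E) +oo.
  by rewrite leey.
have intY : P.-integrable setT (EFin \o Y).
  apply/integrableP; split; first exact/measurable_EFinP.
  apply: (@lty_poweRy _ _ r); first by rewrite gt_eqF// (lt_le_trans ltr01).
  by apply: le_lt_trans lyapunov _; rewrite ltey.
have EX : 'E_P[X] = a%:E - \int[P]_w (Y w)%:E.
  rewrite unlock -[a%:E]integral_cst_probability -integralB_EFin//; last first.
    exact: finite_measure_integrable_cst.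
  by apply: eq_integral => w _; rewrite /Y -EFinB opprB addrC subrK.
have fY : \int[P]_w (Y w)%:E \is a fin_num by exact: integrable_fin_num intY.
have fA : \int[P]_w `|(Y w)%:E| \is a fin_num.
  by rewrite ge0_fin_numE ?integral_ge0//; case/integrableP: intY.
rewrite EX -(fineK fY) -EFinB /= opprB addrC subrK.
apply: le_trans lyapunov; rewrite -(fineK fA) poweR_EFin lee_fin.
apply: ge0_ler_powR; rewrite ?nnegrE ?fine_ge0 ?integral_ge0//.
  by rewrite (le_trans ler01).
rewrite -lee_fin (fineK fA) -abse_EFin (fineK fY).
by apply: le_abse_integral => //; exact/measurable_EFinP.
Qed.

Variables (T : Omega -> int).
Hypothesis mT : measurable_fun setT (fun w => (T w)%:~R : R).

Lemma measurable_fun_comp_int d' (Y : measurableType d') (G : int -> Y) :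
  measurable_fun setT (fun w => G (T w)).
Proof.
move=> _ B mB.
have -> : (setT `&` (fun w => G (T w)) @^-1` B = \bigcup_(k : int)
    if pselect (B (G k)) then setT `&` (fun w => (T w)%:~R : R) @^-1` [set k%:~R]
    else set0)%classic.
  apply/seteqP; split => [w /= [_ BGw]|w [k _]].
    by exists (T w) => //; case: pselect => //= _; split.
  case: pselect => //= BGk [_ /= /eqP]; rewrite eqr_int => /eqP ->; by split.
apply: countable_bigcupT_measurable => [|k]; first exact: countableP.
case: (pselect (B (G k))) => BGk; last exact: measurable0.
by apply: mT => //; exact: measurable_set1.
Qed.

Lemma le_integral_comp_affine (alpha a b : R) (G H : int -> \bar R) :
  (0 <= alpha)%R -> (0 <= a)%R -> (0 <= b)%R ->
  (forall k, 0 <= G k) -> (forall k, 0 <= H k) ->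
  (forall w, alpha%:E * G (T w) <= a%:E * H (T w) + b%:E) ->
  alpha%:E * \int[P]_w G (T w) <= a%:E * \int[P]_w H (T w) + b%:E.
Proof.
move=> alpha0 a0 b0 G0 H0 GH.
have mG := measurable_fun_comp_int G; have mH := measurable_fun_comp_int H.
have aH0 w : 0 <= a%:E * H (T w) by rewrite mule_ge0.
rewrite -!ge0_integralZl_EFin// -[b%:E in leRHS]integral_cst_probability.
rewrite -ge0_integralD//; last exact: measurable_funeM.
apply: ge0_le_integral => //; first by move=> w _; rewrite mule_ge0.
  exact: measurable_funeM.
by apply: emeasurable_funD => //; exact: measurable_funeM.
Qed.

Variable r : R.
Hypothesis r1 : (1 <= r)%R.

Let r0 : (0 <= r)%R. Proof. by rewrite (le_trans ler01). Qed.

(* [E |F(T) - F(T')|^r] for an independent copy [T'] of [T]. *)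
Definition pair_moment (F : int -> R) :=
  \int[P]_w \int[P]_v (`|F (T w) - F (T v)| `^ r)%:E.

Lemma pair_moment_le (F : int -> R) (b : R) :
  pair_moment F <= (2 `^ r)%:E * \int[P]_w (`|F (T w) - b| `^ r)%:E.
Proof.
set M := \int[P]_w _.
have M0 : 0 <= M by exact: integral_ge0.
have [->|M_fin] := eqVneq M +oo.
  by rewrite gt0_muley ?leey// lte_fin powR_gt0.
have M_real : M = (fine M)%:E by rewrite fineK// ge0_fin_numE// ltey.
pose a := (2 `^ (r - 1))%R; have a0 : (0 <= a)%R by exact: powR_ge0.
have inner k : \int[P]_v (`|F k - F (T v)| `^ r)%:E <=
    a%:E * M + (a * `|F k - b| `^ r)%:E.
  rewrite -[X in X <= _]mul1e.
  apply: (le_integral_comp_affine (G := fun j => (`|F k - F j| `^ r)%:E)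
    (H := fun j => (`|F j - b| `^ r)%:E)) => //; first by rewrite mulr_ge0 ?powR_ge0.
  move=> w; rewrite mul1e -!EFinM -EFinD lee_fin.
  by rewrite (le_trans (powR_distB_le _ _ b r1))// mulrDr addrC.
have two_a : (2 `^ r = a + a)%R.
  by rewrite -mulr_powRB1 ?(lt_le_trans ltr01)// mulr_natl mulr2n.
have -> : (2 `^ r)%:E * M = a%:E * M + (a * fine M)%:E.
  by rewrite M_real -!EFinM -EFinD two_a mulrDl.
rewrite -[X in X <= _]mul1e.
apply: (le_integral_comp_affine (G := fun k => \int[P]_v (`|F k - F (T v)| `^ r)%:E)
  (H := fun j => (`|F j - b| `^ r)%:E)) => //.
- by rewrite mulr_ge0// fine_ge0// integral_ge0.
- by move=> k; exact: integral_ge0.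
by move=> w; rewrite mul1e (le_trans (inner _))// M_real -!EFinM -!EFinD lee_fin addrC.
Qed.

Lemma central_moment_le_pair_moment :
  central_moment P r (fun w => (T w)%:~R) <= pair_moment intr.
Proof.
have jensen k := powR_dist_expectation_le (k%:~R) r1 mT.
rewrite /central_moment unlock; set m := fine _.
have := le_integral_comp_affine (alpha := 1) (a := 1) (b := 0)
  (G := fun k => (`|k%:~R - m| `^ r)%:E)
  (H := fun k => \int[P]_v (`|k%:~R - (T v)%:~R| `^ r)%:E).
rewrite !mul1e adde0; apply=> //; first by move=> k; exact: integral_ge0.
by move=> w; rewrite !mul1e adde0; move: (jensen (T w)); rewrite unlock.
Qed.

Lemma pair_moment_growth (D : set int) (ell c : R) (f : int -> int) :
  (0 <= ell)%R -> (0 < c)%R -> lower_growth D ell c f -> (forall w, D (T w)) ->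
  (c `^ r)%:E * pair_moment intr <=
    pair_moment (fun k => (f k)%:~R) + (c `^ r * ell `^ r)%:E.
Proof.
move=> ell0 c0 growth_f DT.
have cr0 : (0 <= c `^ r)%R by exact: powR_ge0.
have cl0 : (0 <= c `^ r * ell `^ r)%R by rewrite mulr_ge0 ?powR_ge0.
have := le_integral_comp_affine (alpha := c `^ r) (a := 1) (b := c `^ r * ell `^ r)
  (G := fun k => \int[P]_v (`|k%:~R - (T v)%:~R| `^ r)%:E)
  (H := fun k => \int[P]_v (`|(f k)%:~R - (f (T v))%:~R| `^ r)%:E).
rewrite mul1e; apply=> //; [by move=> k; exact: integral_ge0..|move=> w].
have := le_integral_comp_affine (alpha := c `^ r) (a := 1) (b := c `^ r * ell `^ r)
  (G := fun j => (`|(T w)%:~R - j%:~R| `^ r)%:E)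
  (H := fun j => (`|(f (T w))%:~R - (f j)%:~R| `^ r)%:E).
rewrite mul1e; apply=> //; [by move=> k; rewrite lee_fin powR_ge0..|move=> v].
rewrite mul1e -!EFinM -EFinD lee_fin.
by have := lower_growth_powR ell0 c0 growth_f r0 (DT v) (DT w).
Qed.

End moments.

Lemma le_scaled_sub (R : realType) (a b L : R) (x y : \bar R) :
  (0 < a)%R -> (0 < b)%R -> 0 <= x ->
  a%:E * x <= b%:E * y + (a * L)%:E -> (a / b)%:E * (x - L%:E) <= y.
Proof.
move=> a0 b0 x0; case: y => [y| |]; last 2 first.
- by rewrite leey.
- rewrite gt0_muleNy ?lte_fin// addNye leeNy_eq => /eqP ax_Ny.
  by have := mule_ge0 (ltW a0 : 0 <= a%:E) x0; rewrite ax_Ny.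
case: x x0 => [x _| _ |//]; last first.
  by rewrite gt0_muley ?lte_fin// -EFinM -EFinD leye_eq.
rewrite -EFinB -!EFinM -EFinD !lee_fin => le_ax.
by rewrite mulrAC ler_pdivrMr// mulrBr lerBlDr [(y * b)%R]mulrC.
Qed.

Theorem lemma2p2 (R : realType) (d : measure_display) (Omega : measurableType d)
  (P : probability Omega R) (D : set int) (ell c r : R) (f : int -> int)
  (T : Omega -> int) :
  (0 <= ell)%R -> (0 < c)%R -> (1 <= r)%R ->
  (forall i j : int, D i -> D j -> (i%:~R + ell <= (j%:~R : R))%R ->
     (c * (j - i)%:~R <= (f j - f i)%:~R)%R) ->
  (forall w, D (T w)) ->
  measurable_fun setT (fun w => ((T w)%:~R : R)) ->
  'E_P[(fun w => (`|((f (T w))%:~R : R)| `^ r)%R)] < +oo ->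
  central_moment P r (fun w => (f (T w))%:~R) >=
    ((c / 2) `^ r)%:E * (central_moment P r (fun w => (T w)%:~R) - (ell `^ r)%:E).
Proof.
move=> ell0 c0 r1 growth_f DT mT _.
have cr0 : (0 < c `^ r)%R by rewrite powR_gt0.
have two_neq0 : (2 != 0 :> R)%R by rewrite pnatr_eq0.
have -> : ((c / 2) `^ r = c `^ r / 2 `^ r)%R.
  by rewrite -[in RHS](divfK two_neq0 c) [in RHS]powRM ?divr_ge0 ?ltW// mulfK//.
apply: le_scaled_sub => //.
  by rewrite /central_moment unlock integral_ge0// => w _; rewrite lee_fin powR_ge0.
apply: le_trans (lee_wpmul2l _ (central_moment_le_pair_moment P mT r1)) _.
  by rewrite lee_fin ltW.
apply: le_trans (pair_moment_growth P mT r1 ell0 c0 growth_f DT) _.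
rewrite leeD2r// /central_moment unlock.
exact: pair_moment_le.
Qed.
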